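(* Let $D$ be an infinite commutative unital integral domain. The $D$-module $D\langle X\rangle/I$ is spanned by the images of the monomials in $B$.
   Context: Let $Y=\{y_1,y_2,\dots\}$ and $Z=\{z_1,z_2,\dots\}$ be disjoint countable sets of variables, $X=Y\cup Z$, and $D\langle X\rangle$ the free unital associative $D$-algebra on $X$, $\mathbb{Z}_2$-graded with the $y_i$ even and the $z_i$ odd. Let $L\langle X\rangle$ be the Lie subalgebra of $D\langle X\rangle$ (bracket $[a,b]=ab-ba$) generated by $X$, with induced grading $L\langle X\rangle^{(0)}\oplus L\langle X\rangle^{(1)}$. An ideal of weak graded identities is a two-sided ideal $J$ of $D\langle X\rangle$ closed under every algebra endomorphism of $D\langle X\rangle$ mapping each $y_i$ into $L\langle X\rangle^{(0)}$ and each $z_i$ into $L\langle X\rangle^{(1)}$; the ideal of weak graded identities generated by a set of polynomials is the smallest such ideal containing it. Let $I$ be the ideal of weak graded identities generated by $y_1y_2-y_2y_1$, $z_1z_2z_3-z_3z_2z_1$ and $y_1z_1+z_1y_1$. Let $B$ be the set of monomials of the forms $y_{a_1}\cdots y_{a_k}$ ($k\ge0$, $a_1\le\dots\le a_k$; $k=0$ gives $1$) and $y_{a_1}\cdots y_{a_k}z_{c_1}z_{d_1}z_{c_2}z_{d_2}\cdots z_{c_m}z_{d_m}$ or $y_{a_1}\cdots y_{a_k}z_{c_1}z_{d_1}\cdots z_{d_{m-1}}z_{c_m}$ (the last odd variable $z_{d_m}$ may be omitted), where $k\ge0$, $m\ge1$, $a_1\le\dots\le a_k$, $c_1\le\dots\le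 c_m$, and the $d_j$ present are nondecreasing. *)

(* The free unital associative algebra D<X> is the monoid
   algebra {malg D[{fmonom V}]} (multinomials/monalg) over the free monoid
   {fmonom V} on the variable set V = nat + nat:
     inl i  stands for the even variable  y_(i+1),
     inr i  stands for the odd  variable  z_(i+1). *)
From HB Require Import structures.
From mathcomp Require Import all_boot all_order all_algebra.
From mathcomp Require Import monalg.
Set Implicit Arguments. Unset Strict Implicit. Unset Printing Implicit Defensive.
Import Order.TTheory GRing.Theory Num.Theory.
Local Open Scope ring_scope.

Definition var_t : choiceType := (nat + nat)%type.

Definition FA (D : idomainType) := {malg D[{fmonom var_t}]}.

Definition mon (D : idomainType) (m : {fmonom var_t}) : FA D := << m >>.

Definition xv (D : idomainType) (v : var_t) : FA D := mon D (fmu v).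
Definition yv (D : idomainType) (i : nat) : FA D := xv D (inl i).
Definition zv (D : idomainType) (i : nat) : FA D := xv D (inr i).

Definition lieb (D : idomainType) (a b : FA D) : FA D := a * b - b * a.

Inductive lieGen (D : idomainType) : FA D -> Prop :=
  | LG_var v : lieGen (xv D v)
  | LG_zero : lieGen 0
  | LG_add a b : lieGen a -> lieGen b -> lieGen (a + b)
  | LG_scale (c : D) a : lieGen a -> lieGen (c *: a)
  | LG_br a b : lieGen a -> lieGen b -> lieGen (lieb a b).

Definition is_odd_var (v : var_t) : bool := if v is inr _ then true else false.
Definition zdeg (m : {fmonom var_t}) : nat := count is_odd_var (m : seq var_t).

Definition homog (D : idomainType) (b : bool) (p : FA D) : Prop :=
  forall m : {fmonom var_t}, mcoeff m p != 0 -> odd (zdeg m) = b.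

Definition L0 (D : idomainType) (p : FA D) : Prop := lieGen p /\ homog false p.
Definition L1 (D : idomainType) (p : FA D) : Prop := lieGen p /\ homog true p.

Definition two_sided_ideal (D : idomainType) (J : FA D -> Prop) : Prop :=
  [/\ J 0,
      (forall a b, J a -> J b -> J (a - b)),
      (forall a b, J b -> J (a * b)) &
      (forall a b, J a -> J (a * b))].

Definition weak_graded_ideal (D : idomainType) (J : FA D -> Prop) : Prop :=
  two_sided_ideal J /\
  forall phi : {lrmorphism FA D -> FA D},
    (forall i, L0 (phi (yv D i))) -> (forall i, L1 (phi (zv D i))) ->
    forall p, J p -> J (phi p).

Definition wgi_gen (D : idomainType) (S : FA D -> Prop) (p : FA D) : Prop :=
  forall J, weak_graded_ideal J -> (forall q, S q -> J q) -> J p.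

Definition gensI (D : idomainType) (q : FA D) : Prop :=
  [\/ q = yv D 0 * yv D 1 - yv D 1 * yv D 0,
      q = zv D 0 * zv D 1 * zv D 2 - zv D 2 * zv D 1 * zv D 0 |
      q = yv D 0 * zv D 0 + zv D 0 * yv D 0].

Definition Iid (D : idomainType) : FA D -> Prop := wgi_gen (@gensI D).

Fixpoint evens (T : Type) (s : seq T) : seq T :=
  match s with [::] => [::] | x :: t => x :: odds t end
with odds (T : Type) (s : seq T) : seq T :=
  match s with [::] => [::] | _ :: t => evens t end.

(* the set B: y_(a1)...y_(ak) z_(c1) z_(d1) z_(c2) z_(d2) ... (last z_(dm)
   possibly omitted), a, c, d nondecreasing; w = [::] gives the pure y-part *)
Definition inB (m : {fmonom var_t}) : Prop :=
  exists (a w : seq nat),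
    (m : seq var_t) = map inl a ++ map inr w /\
    [/\ sorted leq a, sorted leq (evens w) & sorted leq (odds w)].

(* Every word in the variables is congruent modulo I to a scalar multiple of a
   word of B.  By the three generating identities, applied after renaming the
   variables (renaming is an admissible substitution), even variables commute
   with each other and anticommute with odd ones, so the even letters can be
   sorted to the front at the cost of a sign; and z_a z_b z_c = z_c z_b z_a lets
   any two odd letters at distance two be exchanged, so the odd letters in even
   positions and those in odd positions can each be sorted independently.
   The hypothesis that D is infinite is only needed for linear independence,
   not for spanning. *)

From HB Require Import structures.
From mathcomp Require Import all_boot all_order all_algebra.
From mathcomp Require Import monalg.
Import GRing.Theory.

Lemma perm_eq_ind {T : eqType} (R : seq T -> seq T -> Prop) :
  (forall s, R s s) -> (forall s t u, R s t -> R t u -> R s u) ->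
  (forall x s t, R s t -> R (x :: s) (x :: t)) ->
  (forall x y s, R [:: x, y & s] [:: y, x & s]) ->
  forall s t, perm_eq s t -> R s t.
Proof.
move=> Rrefl Rtrans Rcons Rswap.
have Rshift x t2 t1 : R (x :: t1 ++ t2) (t1 ++ x :: t2).
  elim: t1 => [|y t1 IH] /=; first exact: Rrefl.
  exact: Rtrans (Rswap _ _ _) (Rcons _ _ _ IH).
elim=> [|x s IH] t st.
  by case: t st => [|y t] // /perm_size.
have xt : x \in t by rewrite -(perm_mem st) mem_head.
case/splitPr: xt st => t1 t2 st.
apply: Rtrans (Rshift _ _ _); apply/Rcons/IH.
by rewrite -(perm_cons x) (perm_trans st) // (perm_catCA t1 [:: x] t2).
Qed.

Fixpoint interleave {T : Type} (e o : seq T) : seq T :=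
  match e, o with
  | [::], _ => o
  | _, [::] => e
  | x :: e', y :: o' => [:: x, y & interleave e' o']
  end.

Lemma size_odds_evens {T : Type} (w : seq T) :
  size (odds w) <= size (evens w) <= (size (odds w)).+1.
Proof. by elim: w => [|x w IH] //=; rewrite ltnS andbC. Qed.

Lemma interleave_evens_odds {T : Type} (w : seq T) : interleave (evens w) (odds w) = w.
Proof.
elim: {w}(size w) {-2}w (leqnn (size w)) => [|n IH] [|x [|y w]] //= lt_w_n.
by rewrite IH // -ltnS ltnW.
Qed.

Lemma evens_odds_interleave {T : Type} (e o : seq T) :
  size o <= size e <= (size o).+1 ->
  evens (interleave e o) = e /\ odds (interleave e o) = o.
Proof.
elim: e o => [|x e IH] [|y o] //=; first by case: e {IH}.
by rewrite !ltnS => /IH[-> ->].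
Qed.

Local Open Scope ring_scope.

Lemma scalerBtrans {R : pzRingType} {V : lmodType R} (a b e : V) c d :
  a - (c * d) *: e = (a - c *: b) + c *: (b - d *: e).
Proof. by rewrite scalerBr scalerA addrA subrK. Qed.

Section MonomialAlgebra.
Context {K : monomType} {R : comNzRingType}.

Lemma scale_malgU (c a : R) (k : K) :
  c *: << a *g k >> = << c * a *g k >> :> {malg R[K]}.
Proof. by apply/malgP => k'; rewrite mcoeffZ !mcoeffU mulrnAr. Qed.

Lemma mul_malgCr (x : {malg R[K]}) c : x * c%:MP = c *: x.
Proof.
rewrite [in LHS](monalgE x) [in RHS](monalgE x) mulr_suml scaler_sumr.
by apply: eq_bigr => k _; rewrite malgM_def fgmulUU mulm1 scale_malgU mulrC.
Qed.

Lemma scalerAr_malg c (x y : {malg R[K]}) : c *: (x * y) = x * (c *: y).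
Proof. by rewrite -[in RHS]mul_malgC mulrA mul_malgCr scalerAl. Qed.

Lemma mulr_subr_ctx (x a b y : {malg R[K]}) c :
  x * (a * y) - c *: (x * (b * y)) = x * (a - c *: b) * y.
Proof. by rewrite mulrBr mulrBl -scalerAr_malg -scalerAl !mulrA. Qed.

End MonomialAlgebra.

Section FreeAlgebra.
Variable D : idomainType.

Definition wmon (s : seq var_t) : FA D := mon D (FMonom s).

Lemma wmon_cat s t : wmon (s ++ t) = wmon s * wmon t.
Proof.
rewrite /wmon /mon malgM_def fgmulUU mulr1; congr << _ >>.
by apply/val_inj; rewrite /= fmM.
Qed.

Lemma wmon1 v : wmon [:: v] = xv D v.
Proof. by rewrite /xv /wmon fmuE. Qed.

Lemma wmon2 v w : wmon [:: v; w] = xv D v * xv D w.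
Proof. by rewrite -!wmon1 -wmon_cat. Qed.

Lemma wmon3 u v w : wmon [:: u; v; w] = xv D u * xv D v * xv D w.
Proof. by rewrite -!wmon1 -!wmon_cat. Qed.

Lemma Iid0 : Iid (0 : FA D).
Proof. by move=> J [[]]. Qed.

Lemma IidB {a b} : Iid a -> Iid b -> Iid (a - b :> FA D).
Proof.
move=> Ia Ib J JI gJ; case: (JI) => -[_ JB _ _] _.
by apply: JB; [apply: Ia | apply: Ib].
Qed.

Lemma IidD {a b} : Iid a -> Iid b -> Iid (a + b :> FA D).
Proof.
by move=> Ia Ib; rewrite -[b]opprK -[- b]sub0r; apply: IidB Ia (IidB Iid0 Ib).
Qed.

Lemma IidMl a {b} : Iid b -> Iid (a * b :> FA D).
Proof. by move=> Ib J JI gJ; case: (JI) => -[_ _ JM _] _; apply: JM; apply: Ib. Qed.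

Lemma IidMr {a} b : Iid a -> Iid (a * b :> FA D).
Proof. by move=> Ia J JI gJ; case: (JI) => -[_ _ _ JM] _; apply: JM; apply: Ia. Qed.

Lemma IidZ c {a} : Iid a -> Iid (c *: a :> FA D).
Proof. by move=> Ia; rewrite -mul_malgC; apply: IidMl. Qed.

Lemma Iid_gens (phi : {lrmorphism FA D -> FA D}) {q} :
  (forall i, L0 (phi (yv D i))) -> (forall i, L1 (phi (zv D i))) ->
  gensI q -> Iid (phi q).
Proof. by move=> phiY phiZ gq J [_ Jphi] gJ; exact: Jphi phi phiY phiZ q (gJ q gq). Qed.

Section Rename.
Variables gy gz : nat -> nat.

Definition rename_var (v : var_t) : var_t :=
  match v with inl i => inl (gy i) | inr i => inr (gz i) end.

Definition rename_mon (m : {fmonom var_t}) : FA D :=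
  mon D (FMonom (map rename_var m)).

Lemma rename_mon_mmorphism : mmorphism rename_mon.
Proof.
split=> [m m'|]; rewrite /rename_mon /mon ?malgM_def ?fgmulUU ?mulr1;
  by congr << _ >>; apply/val_inj; rewrite /= ?fmM ?map_cat ?fm1.
Qed.

HB.instance Definition _ := isMultiplicative.Build _ _ rename_mon
  rename_mon_mmorphism.

Definition rename (p : FA D) : FA D := mmap (@malgC _ D) rename_mon p.

Lemma rename_is_zmod_morphism : zmod_morphism rename.
Proof. exact: mmap_is_additive. Qed.

HB.instance Definition _ :=
  GRing.isZmodMorphism.Build _ _ rename rename_is_zmod_morphism.

Lemma rename_is_multiplicative : multiplicative rename.
Proof.
apply: commr_mmap_is_multiplicative => c m m'.
by rewrite /GRing.comm mul_malgC mul_malgCr.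
Qed.

HB.instance Definition _ :=
  GRing.isMultiplicative.Build _ _ rename rename_is_multiplicative.

Lemma rename_is_scalable : scalable rename.
Proof. by move=> c p; rewrite /rename mmapZ /= mul_malgC. Qed.

HB.instance Definition _ :=
  GRing.isScalable.Build _ _ _ _ rename rename_is_scalable.

Lemma rename_xv v : rename (xv D v) = xv D (rename_var v).
Proof.
rewrite /rename /xv /mon mmapU mul_malgC scale1r /rename_mon /mon.
by congr << _ >>; apply/val_inj; rewrite /= !fmU.
Qed.

Lemma rename_yv i : rename (yv D i) = yv D (gy i).
Proof. exact: rename_xv. Qed.

Lemma rename_zv i : rename (zv D i) = zv D (gz i).
Proof. exact: rename_xv. Qed.

End Rename.

Lemma renameD gy gz a b :
  rename gy gz (a + b) = rename gy gz a + rename gy gz b.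
Proof. exact: rmorphD. Qed.

Lemma renameB gy gz a b :
  rename gy gz (a - b) = rename gy gz a - rename gy gz b.
Proof. exact: rmorphB. Qed.

Lemma renameM gy gz a b :
  rename gy gz (a * b) = rename gy gz a * rename gy gz b.
Proof. exact: rmorphM. Qed.

Definition rename_lrmorphism gy gz : {lrmorphism FA D -> FA D} := rename gy gz.

Lemma homog_xv v : homog (is_odd_var v) (xv D v).
Proof.
move=> m; rewrite /xv /mon mcoeffU.
case: (fmu v =P m) => [<- _ | _]; last by rewrite mulr0n eqxx.
by rewrite /zdeg fmU; case: v.
Qed.

Lemma L0_yv i : L0 (yv D i).
Proof. by split; [apply: LG_var | exact: (homog_xv (inl i))]. Qed.

Lemma L1_zv i : L1 (zv D i).
Proof. by split; [apply: LG_var | exact: (homog_xv (inr i))]. Qed.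

Lemma Iid_rename {gy gz q} : gensI q -> Iid (rename gy gz q).
Proof.
apply: (Iid_gens (rename_lrmorphism gy gz)) => i.
  by rewrite [_ (yv D i)]rename_yv; apply: L0_yv.
by rewrite [_ (zv D i)]rename_zv; apply: L1_zv.
Qed.

Lemma Iid_yy i j : Iid (yv D i * yv D j - yv D j * yv D i).
Proof.
suff -> : yv D i * yv D j - yv D j * yv D i =
    rename (fun n => if n == 0%N then i else j) id
      (yv D 0 * yv D 1 - yv D 1 * yv D 0).
  exact: Iid_rename (Or31 _ _ erefl).
by rewrite renameB; congr (_ - _); rewrite renameM !rename_yv.
Qed.

Lemma Iid_zzz a b c :
  Iid (zv D a * zv D b * zv D c - zv D c * zv D b * zv D a).
Proof.
suff -> : zv D a * zv D b * zv D c - zv D c * zv D b * zv D a =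
    rename id (fun n => if n == 0%N then a else if n == 1%N then b else c)
      (zv D 0 * zv D 1 * zv D 2 - zv D 2 * zv D 1 * zv D 0).
  exact: Iid_rename (Or32 _ _ erefl).
by rewrite renameB; congr (_ - _); rewrite !renameM !rename_zv.
Qed.

Lemma Iid_yz i a : Iid (yv D i * zv D a + zv D a * yv D i).
Proof.
suff -> : yv D i * zv D a + zv D a * yv D i =
    rename (fun=> i) (fun=> a) (yv D 0 * zv D 0 + zv D 0 * yv D 0).
  exact: Iid_rename (Or33 _ _ erefl).
by rewrite renameD; congr (_ + _); rewrite renameM rename_yv rename_zv.
Qed.

Definition wcong (s t : seq var_t) (c : D) := Iid (wmon s - c *: wmon t).

Lemma wcong_refl s : wcong s s 1.
Proof. by rewrite /wcong scale1r subrr; apply: Iid0. Qed.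

Lemma wcong_trans {s t u c d} : wcong s t c -> wcong t u d -> wcong s u (c * d).
Proof.
move=> st tu; rewrite /wcong (scalerBtrans _ (wmon t)).
exact: IidD st (IidZ _ tu).
Qed.

Lemma wcong_trans1 {s t u} : wcong s t 1 -> wcong t u 1 -> wcong s u 1.
Proof. by move=> st tu; rewrite -(mulr1 1); apply: wcong_trans st tu. Qed.

Lemma wcong_ctx u v {s t c} : wcong s t c -> wcong (u ++ s ++ v) (u ++ t ++ v) c.
Proof.
by move=> st; rewrite /wcong !wmon_cat mulr_subr_ctx; apply: IidMr; apply: IidMl.
Qed.

Lemma wcong_pre u {s t c} : wcong s t c -> wcong (u ++ s) (u ++ t) c.
Proof. by move=> /(wcong_ctx u [::]); rewrite !cats0. Qed.

Lemma wcong_suf v {s t c} : wcong s t c -> wcong (s ++ v) (t ++ v) c.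
Proof. exact: (wcong_ctx [::] v). Qed.

Lemma wcong_yy i j : wcong [:: inl i; inl j] [:: inl j; inl i] 1.
Proof. by rewrite /wcong !wmon2 scale1r; apply: Iid_yy. Qed.

Lemma wcong_zy a i : wcong [:: inr a; inl i] [:: inl i; inr a] (-1).
Proof. by rewrite /wcong !wmon2 scaleN1r opprK addrC; apply: Iid_yz. Qed.

Lemma wcong_zzz a b c :
  wcong [:: inr a; inr b; inr c] [:: inr c; inr b; inr a] 1.
Proof. by rewrite /wcong !wmon3 scale1r; apply: Iid_zzz. Qed.

Lemma wcong_sort_y (a : seq nat) :
  wcong (map inl a) (map inl (sort leq a)) 1.
Proof.
apply: (@perm_eq_ind _ (fun a b => wcong (map inl a) (map inl b) 1)).
- by move=> s; apply: wcong_refl.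
- by move=> s t u st tu; apply: wcong_trans1 st tu.
- by move=> x s t; apply: (wcong_pre [:: inl x]).
- by move=> x y s; apply: (wcong_suf (map inl s) (wcong_yy x y)).
- by rewrite perm_sym perm_sort.
Qed.

Lemma wcong_z_ys (a : seq nat) z :
  wcong (inr z :: map inl a) (map inl a ++ [:: inr z]) ((-1) ^+ size a).
Proof.
elim: a => [|i a IH] /=; first by rewrite expr0; apply: wcong_refl.
rewrite exprS; apply: wcong_trans (wcong_suf (map inl a) (wcong_zy z i)) _.
exact: (wcong_pre [:: inl i] IH).
Qed.

Definition y_index (v : var_t) : option nat :=
  if v is inl i then Some i else None.

Definition z_index (v : var_t) : option nat :=
  if v is inr i then Some i else None.

Lemma wcong_separate w : exists c,
  wcong w (map inl (pmap y_index w) ++ map inr (pmap z_index w)) c.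
Proof.
elim: w => [|[i|z] w [c IH]] /=; first by exists 1; apply: wcong_refl.
  by exists c; apply: (wcong_pre [:: inl i] IH).
exists (c * (-1) ^+ size (pmap y_index w)).
apply: wcong_trans (wcong_pre [:: inr z] IH) _.
by have := wcong_suf (map inr (pmap z_index w)) (wcong_z_ys (pmap y_index w) z);
  rewrite -catA.
Qed.

Lemma wcong_perm_evens {e e' o} : perm_eq e e' -> (size e <= (size o).+1)%N ->
  wcong (map inr (interleave e o)) (map inr (interleave e' o)) 1.
Proof.
pose R e e' := size e = size e' /\ forall o, (size e <= (size o).+1)%N ->
  wcong (map inr (interleave e o)) (map inr (interleave e' o)) 1.
suff /(_ e e') RP : forall e e', perm_eq e e' -> R e e' by move=> /RP[_]; apply.
apply: perm_eq_ind => [s | s t u [st Rst] [tu Rtu] | x s t [st Rst] | x y s].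
- by split=> // o' _; apply: wcong_refl.
- split=> [|o' le_so]; first by rewrite st.
  by apply: wcong_trans1 (Rst o' le_so) (Rtu o' _); rewrite -st.
- split=> [|[|y o'] /= le_so]; first by rewrite /= st.
    move: le_so st; rewrite ltnS leqn0 => /eqP/size0nil -> /esym/size0nil ->.
    exact: wcong_refl.
  exact: (wcong_pre [:: inr x; inr y] (Rst o' le_so)).
- by split=> //; case=> [|a [|b o']] //= _;
    exact: (wcong_suf _ (wcong_zzz x a y)).
Qed.

Lemma wcong_perm_odds {e o o'} : perm_eq o o' -> (size o <= size e)%N ->
  wcong (map inr (interleave e o)) (map inr (interleave e o')) 1.
Proof.
pose R o o' := size o = size o' /\ forall e, (size o <= size e)%N ->
  wcong (map inr (interleave e o)) (map inr (interleave e o')) 1.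
suff /(_ o o') RP : forall o o', perm_eq o o' -> R o o' by move=> /RP[_]; apply.
apply: perm_eq_ind => [s | s t u [st Rst] [tu Rtu] | x s t [st Rst] | x y s].
- by split=> // e' _; apply: wcong_refl.
- split=> [|e' le_se]; first by rewrite st.
  by apply: wcong_trans1 (Rst e' le_se) (Rtu e' _); rewrite -st.
- split=> [|[|a e'] //= le_se]; first by rewrite /= st.
  exact: (wcong_pre [:: inr a; inr x] (Rst e' le_se)).
- split=> //; case=> [|a [|b e']] //= _.
  exact: (wcong_ctx [:: inr a] _ (wcong_zzz x b y)).
Qed.

Definition normal_word (w : seq var_t) : seq var_t :=
  let z := pmap z_index w in
  map inl (sort leq (pmap y_index w)) ++
  map inr (interleave (sort leq (evens z)) (sort leq (odds z))).

Lemma wcong_normal_word w : exists c, wcong w (normal_word w) c.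
Proof.
have [c w_sep] := wcong_separate w; exists (c * 1).
apply: wcong_trans w_sep _; rewrite /normal_word.
set a := pmap y_index w; set z := pmap z_index w.
apply: wcong_trans1 (wcong_suf _ (wcong_sort_y a)) _; apply: wcong_pre.
have /andP[le_oe le_eo] := size_odds_evens z.
have e_sort : perm_eq (evens z) (sort leq (evens z)) by rewrite perm_sym perm_sort.
have o_sort : perm_eq (odds z) (sort leq (odds z)) by rewrite perm_sym perm_sort.
rewrite -[in X in wcong X _](interleave_evens_odds z).
apply: wcong_trans1 (wcong_perm_evens e_sort le_eo) (wcong_perm_odds o_sort _).
by rewrite size_sort.
Qed.

Lemma inB_normal_word w : inB (FMonom (normal_word w)).
Proof.
set z := pmap z_index w.
set e := sort leq (evens z); set o := sort leq (odds z).
exists (sort leq (pmap y_index w)), (interleave e o); split=> //.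
have [-> ->] : evens (interleave e o) = e /\ odds (interleave e o) = o.
  by apply: evens_odds_interleave; rewrite !size_sort size_odds_evens.
by rewrite !sort_sorted.
Qed.

Lemma Iid_span_B (s : seq {fmonom var_t}) (f : {fmonom var_t} -> D) :
  exists r : seq (D * {fmonom var_t}), (forall t, t \in r -> inB t.2) /\
    Iid (\sum_(k <- s) f k *: mon D k - \sum_(t <- r) t.1 *: mon D t.2).
Proof.
elim: s => [|k s [r [rB Ir]]].
  by exists [::]; rewrite !big_nil subr0; split=> //; apply: Iid0.
have [c kc] := wcong_normal_word k.
exists ((f k * c, FMonom (normal_word k)) :: r); split.
  by move=> t; rewrite inE => /orP[/eqP -> | /rB //]; apply: inB_normal_word.
rewrite !big_cons opprD addrACA -scalerA -scalerBr; apply: IidD Ir.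
by apply: IidZ; move: kc; rewrite /wcong /wmon fmK.
Qed.

End FreeAlgebra.

Theorem mainTheorem3 (D : idomainType)
    (D_infinite : forall s : seq D, exists x : D, x \notin s) :
  forall p : FA D,
    exists r : seq (D * {fmonom var_t}),
      (forall t, t \in r -> inB t.2) /\
      Iid (p - \sum_(t <- r) t.1 *: mon D t.2)
    .
Proof.
move=> p; rewrite {1}(monalgE p).
under eq_bigr => k _ do rewrite -[p@_k]mulr1 -scale_malgU.
exact: Iid_span_B.
Qed.
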